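(* Let $X_1$ and $X_2$ be uniformly quasi-locally bounded semimetric spaces with basepoints $x_1$ and $x_2$ respectively, and let $\beta_j$ be the growth function of $X_j$ at $x_j$ for $j=1,2$. If $X_1$ quasi-isometrically embeds into $X_2$, then $\beta_1\preccurlyeq\beta_2$. In particular, if $X_1$ and $X_2$ are quasi-isometric then $\beta_1\sim\beta_2$.
   Context: A semimetric space is a set $X$ with $d:X\times X\to\mathbb{R}^{\ge0}\cup\{\infty\}$ with $d(x,y)=0$ iff $x=y$ and the triangle inequality (not necessarily symmetric). A basepoint is $x_0$ with $d(x_0,y)<\infty$ for all $y$. Out-ball $\overrightarrow{\mathcal{B}}_t(x)=\{y:d(x,y)\le t\}$. $X$ is uniformly quasi-locally bounded if $\sup_{x\in X}|\overrightarrow{\mathcal{B}}_t(x)|<\infty$ for all $t\in\mathbb{N}$; its growth function at $x_0$ is $\beta(t)=|\overrightarrow{\mathcal{B}}_t(x_0)|$. A map $f:X\to X'$ is a quasi-isometric embedding if there are $1\le\lambda<\infty$, $0<\epsilon<\infty$ with $\frac1\lambda d(x,y)-\epsilon\le d'(f(x),f(y))\le\lambda d(x,y)+\epsilon$ for all $x,y$; a quasi-isometry if moreover for some $0\le\mu<\infty$ every $x'\in X'$ has some $x$ with $\max(d'(x',f(x)),d'(f(x),x'))\le\mu$. For monotone non-decreasing $\alpha_1,\alpha_2:\mathbb{N}\to\mathbb{N}$, $\alpha_1\preccurlyeq\alpha_2$ means there are natural numbers $k_1,k_2\ge1$ with $\alpha_1(t)\le k_1\alpha_2(k_2t)$ for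 all $t$, and $\alpha_1\sim\alpha_2$ means both $\alpha_1\preccurlyeq\alpha_2$ and $\alpha_2\preccurlyeq\alpha_1$. *)

From HB Require Import structures.
From mathcomp Require Import all_boot all_order all_algebra.
From mathcomp Require Import all_classical all_reals ereal.
From mathcomp Require Import finmap.
Set Implicit Arguments. Unset Strict Implicit. Unset Printing Implicit Defensive.
Import Order.TTheory GRing.Theory Num.Theory.
Local Open Scope classical_set_scope.
Local Open Scope ring_scope.
Local Open Scope ereal_scope.

Section Defs.
Variable R : realType.

Definition is_semimetric (X : Type) (d : X -> X -> \bar R) : Prop :=
  (forall x y, 0 <= d x y) /\
  (forall x y, d x y = 0 <-> x = y) /\
  (forall x y z, d x z <= d x y + d y z).

Definition is_basepoint (X : Type) (d : X -> X -> \bar R) (x0 : X) : Prop :=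
  forall y, d x0 y < +oo.

Definition out_ball (X : Type) (d : X -> X -> \bar R) (x : X) (t : R) : set X :=
  [set y | d x y <= t%:E].

Definition unif_quasi_locally_bounded (X : choiceType) (d : X -> X -> \bar R) : Prop :=
  forall t : nat, exists N : nat, forall x : X,
    finite_set (out_ball d x t%:R) /\ (#|` fset_set (out_ball d x t%:R)| <= N)%N.

Definition growth (X : choiceType) (d : X -> X -> \bar R) (x0 : X) (t : nat) : nat :=
  #|` fset_set (out_ball d x0 t%:R)|.

Definition qi_embedding (X X' : Type) (d : X -> X -> \bar R) (d' : X' -> X' -> \bar R)
  (f : X -> X') : Prop :=
  exists (lam eps : R), (1 <= lam)%R /\ (0 < eps)%R /\
    forall x y, (lam^-1)%:E * d x y - eps%:E <= d' (f x) (f y) /\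
                d' (f x) (f y) <= lam%:E * d x y + eps%:E.

Definition quasi_isometry (X X' : Type) (d : X -> X -> \bar R) (d' : X' -> X' -> \bar R)
  (f : X -> X') : Prop :=
  qi_embedding d d' f /\
  exists mu : R, (0 <= mu)%R /\
    forall x' : X', exists x : X, maxe (d' x' (f x)) (d' (f x) x') <= mu%:E.
End Defs.

Definition preceq (a1 a2 : nat -> nat) : Prop :=
  exists k1 k2 : nat, (1 <= k1)%N /\ (1 <= k2)%N /\
    forall t, (a1 t <= k1 * a2 (k2 * t))%N.

Definition equiv_growth (a1 a2 : nat -> nat) : Prop := preceq a1 a2 /\ preceq a2 a1.

(* A map h : X -> Y whose fibres have bounded diameter and which sends the
   out-ball of radius t about x0 into the out-ball of radius C + K t about y0
   compares growth functions: by uniform quasi-local boundedness each fibre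
   lies in an out-ball of fixed radius, hence has at most N points, and
   counting the t-ball of X fibre by fibre gives beta_X(t) <= N beta_Y(k t).
   A quasi-isometric embedding f has both properties, and so does a
   quasi-inverse of a quasi-isometry, which gives the reverse comparison. *)

From mathcomp Require Import all_boot all_order all_algebra.
From mathcomp Require Import all_classical all_reals ereal finmap.
From mathcomp Require Import lra zify.
Set Implicit Arguments. Unset Strict Implicit. Unset Printing Implicit Defensive.
Import Order.TTheory GRing.Theory Num.Theory.
Local Open Scope classical_set_scope.
Local Open Scope fset_scope.

Lemma leq_card_fset_fibres (T U : choiceType) (h : T -> U) (N : nat) (B : {fset U}) :
  forall A : {fset T}, {in A, forall a, h a \in B} ->
  (forall b, #|` [fset a | a in A & h a == b]| <= N)%N ->
  (#|` A| <= N * #|` B|)%N.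
Proof.
elim/fset1U_rect: B => [|b B bB IH] A hA hN.
  case: (fset_0Vmem A) => [->|[a aA]]; first by rewrite cardfs0.
  by move: (hA a aA); rewrite inE.
have -> : A = [fset a | a in A & h a == b] `|` [fset a | a in A & h a != b].
  by apply/fsetP => a; rewrite !inE; case: (a \in A); case: (h a == b).
apply: leq_trans (leq_card_fsetU _ _) _.
rewrite cardfsU1 bB /= mulnDr muln1 leq_add //; apply: IH.
  move=> a; rewrite !inE => /andP[aA hab]; move: (hA a aA).
  by rewrite !inE (negbTE hab).
move=> c; apply: leq_trans (hN c); apply: fsubset_leq_card.
by apply/fsubsetP => a; rewrite !inE => /andP[/andP[-> _] ->].
Qed.

Local Open Scope ring_scope.
Local Open Scope ereal_scope.

Section OutBalls.
Variables (R : realType) (X : choiceType) (d : X -> X -> \bar R).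
Hypothesis Ud : unif_quasi_locally_bounded d.

Lemma finite_out_ball x (t : nat) : finite_set (out_ball d x t%:R).
Proof. by case: (Ud t) => N /(_ x) []. Qed.

Lemma mem_fset_out_ball x (t : nat) y :
  (y \in fset_set (out_ball d x t%:R)) = (d x y <= t%:R%:E).
Proof.
rewrite in_fset_set; last exact: finite_out_ball.
by apply/idP/idP => [/set_mem|/mem_set].
Qed.

Lemma growth_gt0 x t : d x x = 0 -> (0 < growth d x t)%N.
Proof.
move=> dxx; rewrite /growth cardfs_gt0; apply/fset0Pn; exists x.
by rewrite mem_fset_out_ball dxx lee_fin.
Qed.

End OutBalls.

Section GrowthComparison.
Variables (R : realType) (X Y : choiceType).
Variables (d : X -> X -> \bar R) (d' : Y -> Y -> \bar R) (x0 : X) (y0 : Y).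
Hypotheses (Ud : unif_quasi_locally_bounded d) (Ud' : unif_quasi_locally_bounded d').
Hypothesis d'y0y0 : d' y0 y0 = 0.
Variables (h : X -> Y) (r C K : R).
Hypothesis h_fibres : forall a b, h a = h b -> d a b <= r%:E.
Hypothesis h_balls : forall x (t : nat), (1 <= t)%N ->
  d x0 x <= t%:R%:E -> d' y0 (h x) <= (C + K * t%:R)%:E.

Lemma card_fibres_bounded :
  exists N, forall (A : {fset X}) b, (#|` [fset a | a in A & h a == b]| <= N)%N.
Proof.
pose m := Num.bound `|r|.
have rm : (r <= m%:R)%R by apply/ltW/(le_lt_trans (ler_norm r))/archi_boundP.
have [N HN] := Ud m; exists N => A b.
have [->|[a aF]] := fset_0Vmem [fset a | a in A & h a == b]; first by rewrite cardfs0.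
apply: leq_trans (fsubset_leq_card _) (HN a).2; apply/fsubsetP => y.
move: aF; rewrite !inE => /andP[_ /eqP hab] /andP[_ /eqP hyb].
rewrite (mem_fset_out_ball Ud).
by rewrite (le_trans (h_fibres (etrans hab (esym hyb)))) // lee_fin.
Qed.

Lemma image_out_ball_linear : exists k : nat, (1 <= k)%N /\
  forall x (t : nat), (1 <= t)%N -> d x0 x <= t%:R%:E -> d' y0 (h x) <= (k * t)%N%:R%:E.
Proof.
pose k := (Num.bound (`|C| + `|K|)).+1.
have CKk : (`|C| + `|K| <= k%:R)%R.
  have := archi_boundP (addr_ge0 (normr_ge0 C) (normr_ge0 K)).
  by move/ltW/le_trans; apply; rewrite ler_nat.
exists k; split=> // x t t1 hx; rewrite (le_trans (h_balls t1 hx)) // lee_fin natrM.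
have t1R : (1 <= t%:R :> R)%R by rewrite ler1n.
have := ler_norm C; have := ler_norm K; have := normr_ge0 C; nra.
Qed.

Lemma growth_preceq_of_fibres : preceq (growth d x0) (growth d' y0).
Proof.
have [N HN] := card_fibres_bounded; have [k [k1 Hk]] := image_out_ball_linear.
have [N0 HN0] := Ud 0%N.
exists (N0 + N)%N.+1, k; do 2!split=> //; case=> [|t].
  have := (HN0 x0).2; have := growth_gt0 Ud' (k * 0) d'y0y0; rewrite /growth; nia.
suff : (growth d x0 t.+1 <= N * growth d' y0 (k * t.+1))%N by nia.
apply: leq_card_fset_fibres (HN _) => a.
rewrite (mem_fset_out_ball Ud) (mem_fset_out_ball Ud').
exact: Hk.
Qed.

End GrowthComparison.

Lemma qi_lower_bound_inv (R : realType) (lam eps : R) (e E : \bar R) : (0 < lam)%R ->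
  (lam^-1)%:E * e - eps%:E <= E -> e <= lam%:E * (E + eps%:E).
Proof. by move=> lam0; rewrite leeBlDr // lee_pdivrMl. Qed.

Section QuasiIsometricEmbedding.
Variables (R : realType) (X1 X2 : choiceType).
Variables (d1 : X1 -> X1 -> \bar R) (d2 : X2 -> X2 -> \bar R) (x1 : X1) (x2 : X2).
Hypotheses (U1 : unif_quasi_locally_bounded d1) (U2 : unif_quasi_locally_bounded d2).
Hypotheses (d1_semimetric : is_semimetric d1) (d2_semimetric : is_semimetric d2).

Lemma qi_embedding_growth_preceq (f : X1 -> X2) :
  is_basepoint d2 x2 -> qi_embedding d1 d2 f -> preceq (growth d1 x1) (growth d2 x2).
Proof.
case: d2_semimetric => [d2_ge0 [d2_eq0 tri2]] bp2 [lam [eps [lam1 [_ Hf]]]].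
have lam0 : (0 < lam)%R by lra.
pose c := fine (d2 x2 (f x1)).
have cE : d2 x2 (f x1) = c%:E by rewrite fineK // ge0_fin_numE.
apply: (growth_preceq_of_fibres (h := f) (r := lam * eps) (C := c + eps) (K := lam)
  U1 U2 (proj2 (d2_eq0 _ _) erefl)).
  move=> a b fab; have := (Hf a b).1; rewrite fab (proj2 (d2_eq0 _ _) erefl).
  by move/(qi_lower_bound_inv lam0); rewrite add0e -EFinM.
move=> x t _ hx; apply: le_trans (tri2 x2 (f x1) (f x)) _.
have lam_hx : lam%:E * d1 x1 x <= (lam * t%:R)%:E
  by rewrite EFinM; apply: lee_wpmul2l => //; rewrite lee_fin ltW.
apply: le_trans (leeD (lexx _) (le_trans (Hf x1 x).2 (leeD lam_hx (lexx _)))) _.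
by rewrite cE -!EFinD lee_fin; lra.
Qed.

Lemma quasi_isometry_growth_preceq (f : X1 -> X2) :
  is_basepoint d1 x1 -> quasi_isometry d1 d2 f -> preceq (growth d2 x2) (growth d1 x1).
Proof.
case: d1_semimetric => [d1_ge0 [d1_eq0 _]]; case: d2_semimetric => [_ [_ tri2]].
move=> bp1 [[lam [eps [lam1 [_ Hf]]]] [mu [_ Hmu]]].
have lam0 : (0 < lam)%R by lra.
have [g Hg] := choice Hmu.
have g_near x' : d2 x' (f (g x')) <= mu%:E /\ d2 (f (g x')) x' <= mu%:E.
  by move: (Hg x'); rewrite ge_max => /andP[].
pose a := fine (d1 x1 (g x2)).
have aE : d1 x1 (g x2) = a%:E by rewrite fineK // ge0_fin_numE.
apply: (growth_preceq_of_fibres (h := g) (r := mu + mu)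
  (C := lam * (lam * a + eps + (mu + mu) + eps)) (K := lam) U2 U1 (proj2 (d1_eq0 _ _) erefl)).
  move=> b b' gb; apply: le_trans (tri2 b (f (g b)) b') _.
  by rewrite EFinD leeD ?(g_near b).1 // gb (g_near b').2.
move=> x' t _ hx.
have D_le : d2 (f x1) (f (g x')) <= (lam * a + eps + (mu + (t%:R + mu)))%:E.
  apply: le_trans (tri2 _ (f (g x2)) _) _; rewrite EFinD leeD //.
    by rewrite EFinD EFinM -aE (Hf x1 (g x2)).2.
  apply: le_trans (tri2 _ x2 _) _; rewrite EFinD leeD ?(g_near x2).2 //.
  by apply: le_trans (tri2 _ x' _) _; rewrite EFinD leeD ?(g_near x').1.
have := qi_lower_bound_inv lam0 (le_trans (Hf x1 (g x')).1 D_le).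
by move/le_trans; apply; rewrite -EFinD -EFinM lee_fin; lra.
Qed.
End QuasiIsometricEmbedding.

Theorem proposition6p4 (R : realType)
  (X1 X2 : choiceType) (d1 : X1 -> X1 -> \bar R) (d2 : X2 -> X2 -> \bar R)
  (x1 : X1) (x2 : X2) :
  is_semimetric d1 -> is_semimetric d2 ->
  is_basepoint d1 x1 -> is_basepoint d2 x2 ->
  unif_quasi_locally_bounded d1 -> unif_quasi_locally_bounded d2 ->
  ((exists f : X1 -> X2, qi_embedding d1 d2 f) ->
     preceq (growth d1 x1) (growth d2 x2)) /\
  ((exists f : X1 -> X2, quasi_isometry d1 d2 f) ->
     equiv_growth (growth d1 x1) (growth d2 x2)).
Proof.
move=> sm1 sm2 bp1 bp2 U1 U2.
have qi_preceq f : qi_embedding d1 d2 f -> preceq (growth d1 x1) (growth d2 x2).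
  exact: (qi_embedding_growth_preceq x1 U1 U2 sm2 bp2).
split=> [[f /qi_preceq //] | [f qif]]; split; first exact: qi_preceq qif.1.
exact: (quasi_isometry_growth_preceq x2 U1 U2 sm1 sm2 bp1 qif).
Qed.
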